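(* Let $\mathcal{T}=(C,B,A)$ and $\mathcal{T}'=(C',B',A')$ be $m\times(n,m,m)$ triples, and define the $m\times(n+2m)$ polynomial matrices $\mathcal{T}(x,y)=[C\ \ xI_m+B\ \ yI_m+A]$ and $\mathcal{T}'(x,y)=[C'\ \ xI_m+B'\ \ yI_m+A']$ in indeterminates $x,y$. Then $\mathcal{T}$ and $\mathcal{T}'$ are feedback similar if and only if there exist nonsingular complex matrices $S\in\mathbb{C}^{m\times m}$ and $R\in\mathbb{C}^{(n+2m)\times(n+2m)}$ such that $S\,\mathcal{T}'(x,y)=\mathcal{T}(x,y)\,R$.
   Context: An $m\times(n,m,m)$ triple is $(C,B,A)$ with $C\in\mathbb{C}^{m\times n}$, $B,A\in\mathbb{C}^{m\times m}$. Two such triples are feedback similar if $[C'\ B'\ A']=S^{-1}[C\ B\ A]\begin{bmatrix}P&V&U\\0&S&0\\0&0&S\end{bmatrix}$ for some $U,V\in\mathbb{C}^{n\times m}$ and nonsingular $P\in\mathbb{C}^{n\times n}$, $S\in\mathbb{C}^{m\times m}$. *)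

From HB Require Import structures.
From mathcomp Require Import all_boot all_order all_algebra.
From mathcomp Require Import complex.
From mathcomp Require Import Rstruct.
From Stdlib Require Import Reals.

Set Implicit Arguments.
Unset Strict Implicit.
Unset Printing Implicit Defensive.

Import Order.TTheory GRing.Theory Num.Theory.
Local Open Scope ring_scope.

Notation CC := (complex R).

Definition trip_mx (m n : nat) (C : 'M[CC]_(m, n)) (B A : 'M[CC]_m)
  : 'M[CC]_(m, n + (m + m)) := row_mx C (row_mx B A).

Definition fb_block (m n : nat) (P : 'M[CC]_n) (V U : 'M[CC]_(n, m))
  (S : 'M[CC]_m) : 'M[CC]_(n + (m + m)) :=
  block_mx P (row_mx V U) 0 (block_mx S 0 0 S).

Definition feedback_similar (m n : nat) (C : 'M[CC]_(m, n)) (B A : 'M[CC]_m)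
  (C' : 'M[CC]_(m, n)) (B' A' : 'M[CC]_m) : Prop :=
  exists (U V : 'M[CC]_(n, m)) (P : 'M[CC]_n) (S : 'M[CC]_m),
    [/\ P \in unitmx, S \in unitmx &
        trip_mx C' B' A' = invmx S *m trip_mx C B A *m fb_block P V U S].

(* Polynomials in two indeterminates x, y: {poly {poly CC}}, where the
   outer variable 'X is y and the inner variable ('X)%:P is x. *)
Definition cst2 (c : CC) : {poly {poly CC}} := (c%:P)%:P.
Definition var_x : {poly {poly CC}} := ('X)%:P.
Definition var_y : {poly {poly CC}} := 'X.

Definition trip_poly (m n : nat) (C : 'M[CC]_(m, n)) (B A : 'M[CC]_m)
  : 'M[{poly {poly CC}}]_(m, n + (m + m)) :=
  row_mx (map_mx cst2 C)
    (row_mx (var_x%:M + map_mx cst2 B) (var_y%:M + map_mx cst2 A)).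

From mathcomp Require Import all_boot all_order all_algebra.
From mathcomp Require Import complex Rstruct.
From Stdlib Require Import Reals.
Import GRing.Theory.
Local Open Scope ring_scope.

(* Comparing the coefficients of 1, x and y, the identity S T'(x,y) = T(x,y) R
   splits into S [C' B' A'] = [C B A] R together with two identities saying
   that the last 2m rows of R are [0 S 0; 0 0 S].  Hence R has the shape
   [P V U; 0 S 0; 0 0 S] of a feedback transformation, and the constant
   identity is then exactly feedback similarity. *)

Lemma cst2_affine_inj (u0 u1 u2 v0 v1 v2 : CC) :
  cst2 u0 + var_x * cst2 u1 + var_y * cst2 u2 =
  cst2 v0 + var_x * cst2 v1 + var_y * cst2 v2 -> [/\ u0 = v0, u1 = v1 & u2 = v2].
Proof.
rewrite /cst2 /var_x /var_y -!polyCM => E.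
have coef_eq i j := congr1 (fun p : {poly {poly CC}} => (p`_i)`_j) E.
move: (coef_eq 0%N 0%N) (coef_eq 0%N 1%N) (coef_eq 1%N 0%N) => /=.
by rewrite !(coefD, coefC, coefXM) /= !addr0 !add0r => -> -> ->.
Qed.

Lemma map_cst2_mulmx (p q r : nat) (M : 'M[CC]_(p, q)) (N : 'M[CC]_(q, r)) :
  map_mx cst2 (M *m N) = map_mx cst2 M *m map_mx cst2 N.
Proof.
have cst2E (k l : nat) (X : 'M[CC]_(k, l)) :
    map_mx cst2 X = map_mx polyC (map_mx polyC X).
  by apply/matrixP => i j; rewrite !mxE.
by rewrite !cst2E !map_mxM.
Qed.

Lemma map_cst2_affine_inj (p q : nat) (M0 M1 M2 N0 N1 N2 : 'M[CC]_(p, q)) :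
  map_mx cst2 M0 + var_x *: map_mx cst2 M1 + var_y *: map_mx cst2 M2 =
  map_mx cst2 N0 + var_x *: map_mx cst2 N1 + var_y *: map_mx cst2 N2 ->
  [/\ M0 = N0, M1 = N1 & M2 = N2].
Proof.
move=> E.
have entry_eq i j : [/\ M0 i j = N0 i j, M1 i j = N1 i j & M2 i j = N2 i j].
  by apply: cst2_affine_inj; move/matrixP: E => /(_ i j); rewrite !mxE.
by split; apply/matrixP => i j; case: (entry_eq i j).
Qed.

Definition xcoef_mx (m n : nat) : 'M[CC]_(m, n + (m + m)) := trip_mx 0 1%:M 0.
Definition ycoef_mx (m n : nat) : 'M[CC]_(m, n + (m + m)) := trip_mx 0 0 1%:M.

Lemma trip_polyE (m n : nat) (C : 'M[CC]_(m, n)) (B A : 'M[CC]_m) :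
  trip_poly C B A = map_mx cst2 (trip_mx C B A)
    + var_x *: map_mx cst2 (xcoef_mx m n) + var_y *: map_mx cst2 (ycoef_mx m n).
Proof.
have cst2_0 : cst2 0 = 0 by rewrite /cst2 !polyC0.
have cst2_1 : cst2 1 = 1 by rewrite /cst2 !polyC1.
apply/matrixP => i j; rewrite /trip_poly /xcoef_mx /ycoef_mx /trip_mx !mxE.
case: (fintype.split j) => k; rewrite !mxE ?cst2_0 ?mulr0 ?addr0 //.
by case: (fintype.split k) => l; rewrite !mxE ?cst2_0 ?mulr0 ?addr0 ?add0r;
  case: eqP; rewrite ?cst2_1 ?cst2_0 ?mulr1 ?mulr0 ?mulr1n ?mulr0n addrC.
Qed.

Lemma trip_poly_eqP (m n : nat) (C : 'M[CC]_(m, n)) (B A : 'M[CC]_m)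
  (C' : 'M[CC]_(m, n)) (B' A' : 'M[CC]_m) (S : 'M[CC]_m)
  (R : 'M[CC]_(n + (m + m))) :
  map_mx cst2 S *m trip_poly C' B' A' = trip_poly C B A *m map_mx cst2 R <->
  [/\ S *m trip_mx C' B' A' = trip_mx C B A *m R,
      S *m xcoef_mx m n = xcoef_mx m n *m R &
      S *m ycoef_mx m n = ycoef_mx m n *m R].
Proof.
rewrite !trip_polyE !(mulmxDr, mulmxDl) -!scalemxAr -!scalemxAl -!map_cst2_mulmx.
by split=> [/map_cst2_affine_inj // | [-> -> ->]].
Qed.

Lemma trip_mx0_mul (m n : nat) (B A : 'M[CC]_m) (R : 'M[CC]_(n + (m + m))) :
  trip_mx 0 B A *m R = B *m usubmx (dsubmx R) + A *m dsubmx (dsubmx R).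
Proof.
rewrite -{1}(vsubmxK R) -{1}(vsubmxK (dsubmx R)) /trip_mx.
by rewrite !mul_row_col mul0mx add0r.
Qed.

Lemma xcoef_mul (m n : nat) (R : 'M[CC]_(n + (m + m))) :
  xcoef_mx m n *m R = usubmx (dsubmx R).
Proof. by rewrite trip_mx0_mul mul1mx mul0mx addr0. Qed.

Lemma ycoef_mul (m n : nat) (R : 'M[CC]_(n + (m + m))) :
  ycoef_mx m n *m R = dsubmx (dsubmx R).
Proof. by rewrite trip_mx0_mul mul1mx mul0mx add0r. Qed.

Lemma mul_xcoef (m n : nat) (S : 'M[CC]_m) :
  S *m xcoef_mx m n = row_mx 0 (row_mx S 0).
Proof. by rewrite /xcoef_mx /trip_mx !mul_mx_row !mulmx0 mulmx1. Qed.

Lemma mul_ycoef (m n : nat) (S : 'M[CC]_m) :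
  S *m ycoef_mx m n = row_mx 0 (row_mx 0 S).
Proof. by rewrite /ycoef_mx /trip_mx !mul_mx_row !mulmx0 mulmx1. Qed.

Lemma unitmx_fb_block (m n : nat) (P : 'M[CC]_n) (V U : 'M[CC]_(n, m))
  (S : 'M[CC]_m) :
  (fb_block P V U S \in unitmx) = (P \in unitmx) && (S \in unitmx).
Proof. by rewrite !unitmxE det_ublock det_ublock !unitrM andbb. Qed.

Lemma dsubmx_fb_block (m n : nat) (P : 'M[CC]_n) (V U : 'M[CC]_(n, m))
  (S : 'M[CC]_m) :
  dsubmx (fb_block P V U S) = col_mx (row_mx 0 (row_mx S 0)) (row_mx 0 (row_mx 0 S)).
Proof. by rewrite /fb_block /block_mx col_mxKd -[RHS]/(block_mx _ _ _ _) block_mxEh col_mx0. Qed.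

Lemma fb_blockP {m n : nat} {S : 'M[CC]_m} {R : 'M[CC]_(n + (m + m))} :
  S *m xcoef_mx m n = xcoef_mx m n *m R ->
  S *m ycoef_mx m n = ycoef_mx m n *m R ->
  R = fb_block (lsubmx (usubmx R)) (lsubmx (rsubmx (usubmx R)))
               (rsubmx (rsubmx (usubmx R))) S.
Proof.
rewrite mul_xcoef mul_ycoef xcoef_mul ycoef_mul => Rx Ry.
rewrite -[RHS]vsubmxK dsubmx_fb_block Rx Ry vsubmxK.
by rewrite /fb_block /block_mx col_mxKu !hsubmxK vsubmxK.
Qed.

Theorem lemma12 (m n : nat) (C : 'M[CC]_(m, n)) (B A : 'M[CC]_m)
  (C' : 'M[CC]_(m, n)) (B' A' : 'M[CC]_m) :
  feedback_similar C B A C' B' A' <->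
  exists (S : 'M[CC]_m) (R : 'M[CC]_(n + (m + m))),
    [/\ S \in unitmx, R \in unitmx &
        map_mx cst2 S *m trip_poly C' B' A' = trip_poly C B A *m map_mx cst2 R].
Proof.
split=> [[U [V [P [S [uP uS E]]]]] | [S [R [uS uR /trip_poly_eqP [E Rx Ry]]]]].
  exists S, (fb_block P V U S); rewrite unitmx_fb_block uP uS.
  split=> //; apply/trip_poly_eqP; split.
  - by rewrite E !mulmxA mulmxV // mul1mx.
  - by rewrite mul_xcoef xcoef_mul dsubmx_fb_block col_mxKu.
  - by rewrite mul_ycoef ycoef_mul dsubmx_fb_block col_mxKd.
have RE := fb_blockP Rx Ry.
move: uR; rewrite {1}RE unitmx_fb_block => /andP [uP _].
exists (rsubmx (rsubmx (usubmx R))), (lsubmx (rsubmx (usubmx R))),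
  (lsubmx (usubmx R)), S.
by split=> //; rewrite -mulmxA -RE -E mulKmx.
Qed.
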